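(* Let $\kappa$ be a nonzero real constant and $\gamma\in\{1,-1\}$. Let $W(\xi,\eta,\mu)=\sum_{n\ge1}W^{(n)}(\xi,\eta)\,\mu^{-n}$ be the off-diagonal $2\times2$ matrix series appearing in the large-spectral-parameter decomposition of the fundamental solution described in the context, and define the generating function \[ \mathbb Y(\xi,\eta,\lambda;\mu)=\frac{\gamma\kappa}{2i(\lambda-\mu)}\,(\mathbb 1+W(\xi,\eta,\mu))\,\sigma_3\,(\mathbb 1+W(\xi,\eta,\mu))^{-1}, \] with matrices $\mathbb Y^{(n)}(\xi,\eta,\lambda)$, $n\ge0$, defined by the large-$\mu$ expansion $\mathbb Y(\xi,\eta,\lambda;\mu)=\kappa\sum_{n=1}^\infty \mathbb Y^{(n-1)}(\xi,\eta,\lambda)\,\mu^{-n}$. Then \[ \mathbb Y^{(0)}(\xi,\eta,\lambda)=\frac{i\gamma}{2}\sigma_3, \] and for all $n\ge1$, \[ \mathbb Y^{(n)}(\xi,\eta,\lambda)=\lambda\,\mathbb Y^{(n-1)}(\xi,\eta,\lambda)+i\gamma\,\sigma_3\sum_{j=1}^n(-1)^j\sum_{\substack{m_1+\dots+m_j=n\\ m_1,\dots,m_j\ge1}}W^{(m_1)}\cdots W^{(m_j)}, \] where the inner sum runs over all ordered decompositions of $n$ into $j$ positive integers.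
   Context: Setting: $\mathbb X(\xi,\eta,\lambda)$ is a $2\times2$ matrix that is a polynomial of degree $N$ in the spectral parameter $\lambda$, with $\mathrm{Tr}\,\mathbb X=0$ and $\overline{\mathbb X(\xi,\eta,\bar\lambda)}=\sigma\,\mathbb X(\xi,\eta,\lambda)\,\sigma$, where $\sigma=\sigma_1$ if $\kappa>0$ and $\sigma=\sigma_2$ if $\kappa<0$; $\sigma_1,\sigma_2,\sigma_3$ are the Pauli matrices. Periodic boundary conditions are imposed in $\xi\in[-\Lambda,\Lambda]$. Let $\mathbb T(\xi,\zeta,\lambda)$ be the fundamental solution of $\partial_\xi\Psi=\mathbb X\Psi$ normalized by $\mathbb T(\xi,\xi,\lambda)=\mathbb 1$. For large $\lambda$ it is written as $\mathbb T(\xi,\zeta,\lambda)=(\mathbb 1+W(\xi,\lambda))e^{Z(\xi,\zeta,\lambda)}(\mathbb 1+W(\zeta,\lambda))^{-1}$ with $W$ off-diagonal, $W(\xi,\lambda)=\sum_{n\ge1}W^{(n)}(\xi)\lambda^{-n}$, and $Z$ diagonal; the coefficients $W^{(n)}$ (which also depend on the second variable $\eta$) are determined by the matrix Riccati equation $W_\xi=\mathbb X_dW-W\mathbb X_d+\mathbb X_o-W\mathbb X_oW$, where $\mathbb X_d$, $\mathbb X_o$ are the diagonal and off-diagonal parts of $\mathbb X$. Expansions in $\mu$ are understood as formal large-$\mu$ expansions. *)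

From HB Require Import structures.
From mathcomp Require Import all_boot all_order all_algebra.
From mathcomp Require Import complex.
Set Implicit Arguments. Unset Strict Implicit. Unset Printing Implicit Defensive.
Import Order.TTheory GRing.Theory Num.Theory.
Local Open Scope ring_scope.
Local Open Scope complex_scope.

(* Formal power series in x = mu^{-1} with coefficients in 2x2 complex
   matrices are represented by their coefficient sequences  nat -> 'M_2 :
   s represents  \sum_n s n * x^n. *)
Definition mseries (R : rcfType) := nat -> 'M[R[i]]_2.

Definition smul (R : rcfType) (a b : mseries R) : mseries R :=
  fun n => \sum_(k < n.+1) a k * b (n - k)%N.

Definition sone (R : rcfType) : mseries R := fun n => if n == 0%N then 1 else 0.

Definition sigma3 (R : rcfType) : 'M[R[i]]_2 :=
  \matrix_(i < 2, j < 2) (if i == j then (if i == 0 :> nat then 1 else -1) else 0).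

Definition offdiag (R : rcfType) (A : 'M[R[i]]_2) : Prop := forall i, A i i = 0.

(* The series 1 + W(mu) = 1 + \sum_{n>=1} W^{(n)} mu^{-n}, given the coefficients
   Wc n (only n >= 1 are used). *)
Definition oneW (R : rcfType) (Wc : nat -> 'M[R[i]]_2) : mseries R :=
  fun n => if n == 0%N then 1 else Wc n.

(* Large-mu expansion of 1/(lambda - mu) = - \sum_{k>=0} lambda^k mu^{-k-1}. *)
Definition geom (R : rcfType) (lam : R[i]) : nat -> R[i] :=
  fun n => if n == 0%N then 0 else - lam ^+ n.-1.

(* Coefficients of the generating function
     Y(lambda; mu) = gamma kappa / (2 i (lambda - mu)) * (1+W) sigma3 V,
   where V is the (formal) inverse of 1+W:  Ycoef n = coefficient of mu^{-n}. *)
Definition Ycoef (R : rcfType) (gam kap : R) (lam : R[i])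
    (Wc : nat -> 'M[R[i]]_2) (V : mseries R) (n : nat) : 'M[R[i]]_2 :=
  let A := smul (smul (oneW Wc) (fun m => if m == 0%N then sigma3 R else 0)) V in
  ((gam%:C * kap%:C) / (2 * 'i)) *: \sum_(k < n.+1) geom lam k *: A (n - k)%N.

(* Y^{(n)} defined by  Y = kappa \sum_{n>=1} Y^{(n-1)} mu^{-n}. *)
Definition Yn (R : rcfType) (gam kap : R) (lam : R[i])
    (Wc : nat -> 'M[R[i]]_2) (V : mseries R) (n : nat) : 'M[R[i]]_2 :=
  (kap%:C)^-1 *: Ycoef gam kap lam Wc V n.+1.

Definition compsum (R : rcfType) (Wc : nat -> 'M[R[i]]_2) (n j : nat) : 'M[R[i]]_2 :=
  \sum_(m : {ffun 'I_j -> 'I_n.+1} |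
          ((\sum_(i < j) (m i : nat))%N == n) && [forall i, (0 < m i)%N])
    \prod_(i < j) Wc (m i : nat).

(** Since every W^(n) is off-diagonal it anticommutes with sigma3, so
    (1 + W) sigma3 = sigma3 (2 - (1 + W)) and therefore
    (1 + W) sigma3 (1 + W)^-1 = 2 sigma3 (1 + W)^-1 - sigma3.  Its coefficients
    beyond the constant one are those of 2 sigma3 (1 + W)^-1, and the inverse is
    the geometric series sum_j (-W)^j, whose mu^-n coefficient is
    sum_j (-1)^j compsum n j.  Multiplying by 1/(lambda - mu) turns the
    coefficient sequence into a first-order recursion in lambda, which is the
    claimed formula; the constant coefficient gives Y^(0). *)
From HB Require Import structures.
From mathcomp Require Import all_boot all_order all_algebra.
From mathcomp Require Import complex.
From mathcomp Require Import zify ring.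
Set Implicit Arguments. Unset Strict Implicit. Unset Printing Implicit Defensive.
Import Order.TTheory GRing.Theory Num.Theory.
Local Open Scope ring_scope.
Local Open Scope complex_scope.

Section PolyCoef.
Variable T : nzRingType.

Lemma prodr_monomial (I : Type) (r : seq I) (c : I -> T) (e : I -> nat) :
  \prod_(i <- r) ((c i)%:P * 'X^(e i)) =
  (\prod_(i <- r) c i)%:P * 'X^(\sum_(i <- r) e i)%N.
Proof.
elim: r => [|a r IH]; first by rewrite !big_nil mul1r.
rewrite !big_cons IH mulrA -(mulrA (c a)%:P) -commr_polyXn.
by rewrite mulrA -polyCM -mulrA -exprD.
Qed.

Lemma coef_exprMX_small (p : {poly T}) m k :
  (k < m)%N -> ((p * 'X) ^+ m)`_k = 0.
Proof.
by move=> ltkm; rewrite exprMn_comm ?coefMXn ?ltkm //; apply: commr_polyX.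
Qed.

Lemma prodr_has_eq0 (I : Type) (r : seq I) (c : I -> T) :
  has (fun i => c i == 0) r -> \prod_(i <- r) c i = 0.
Proof.
elim: r => [//|a r IH] /=; rewrite big_cons.
by case/orP => [/eqP -> | /IH ->]; rewrite ?mul0r ?mulr0.
Qed.

Lemma convl_unit_inj (o x y : nat -> T) N : o 0%N = 1 ->
  (forall k, (k <= N)%N ->
     \sum_(i < k.+1) o i * x (k - i)%N = \sum_(i < k.+1) o i * y (k - i)%N) ->
  forall k, (k <= N)%N -> x k = y k.
Proof.
move=> o0 eq_conv k; elim: k {-2}k (leqnn k) => [|K IH] k lekK lekN;
  move: (eq_conv k lekN); rewrite !big_ord_recl !subn0 o0 !mul1r.
  by move: lekK; rewrite leqn0 => /eqP ->; rewrite !big_ord0 !addr0.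
rewrite (eq_bigr (fun i : 'I_k => o i.+1 * y (k - i.+1)%N)) => [/addIr //|i _].
by rewrite !lift0 IH //; have := ltn_ord i; lia.
Qed.

End PolyCoef.

Section Series.
Variable R : rcfType.
Local Notation M := 'M[R[i]]_2.

Lemma offdiag_mul_sigma3 (A : M) : offdiag A -> A * sigma3 R = - (sigma3 R * A).
Proof.
move=> offA; have A00 : A ord0 ord0 = 0 by apply: offA.
have A11 : A (lift ord0 ord0) (lift ord0 ord0) = 0 by apply: offA.
apply/matrixP => i j; rewrite -mulmxE !mxE !big_ord_recl !big_ord0 !mxE /=.
have E0 (h : (0 < 2)%N) : Ordinal h = ord0 by apply/val_inj.
have E1 (h : (1 < 2)%N) : Ordinal h = lift ord0 ord0 by apply/val_inj.
case: i => [[|[|//]] hi]; case: j => [[|[|//]] hj]; rewrite ?E0 ?E1 /= ?A00 ?A11;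
  by rewrite ?mulr0 ?mul0r ?mulr1 ?mul1r ?mulrN1 ?mulN1r ?addr0 ?add0r ?oppr0 ?opprK.
Qed.

(* The series W with its (unused) constant coefficient set to zero, and its
   truncation modulo mu^-(n+1), as a polynomial in mu^-1. *)
Definition wcoef (Wc : nat -> M) (a : nat) : M := if a == 0%N then 0 else Wc a.
Definition wtrunc (Wc : nat -> M) (n : nat) : {poly M} := \poly_(a < n.+1) wcoef Wc a.

Lemma wtrunc_mulX (Wc : nat -> M) n :
  wtrunc Wc n = (\poly_(a < n) wcoef Wc a.+1) * 'X.
Proof.
apply/polyP => i; rewrite coefMX !coef_poly.
by case: i => [|i] //=; rewrite /wcoef /= ltnS.
Qed.

Lemma compsum_coef (Wc : nat -> M) n j :
  compsum Wc n j = (wtrunc Wc n ^+ j)`_n.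
Proof.
rewrite /wtrunc poly_def -[X in _ ^+ X](card_ord j) -prodr_const.
rewrite bigA_distr_bigA /= coef_sum.
transitivity (\sum_(f : {ffun 'I_j -> 'I_n.+1} | (\sum_(i < j) (f i : nat))%N == n)
                \prod_(i < j) wcoef Wc (f i)).
  rewrite /compsum [RHS](bigID (fun f : {ffun 'I_j -> 'I_n.+1} =>
                                 [forall i, (0 < f i)%N])) /=.
  rewrite [X in _ = _ + X]big1 ?addr0 => [|f /andP [_ /forallPn [i f0]]].
    apply: eq_bigr => f /andP [_ /forallP fpos]; apply: eq_bigr => i _.
    by rewrite /wcoef; move: (fpos i); rewrite lt0n => /negbTE ->.
  apply: prodr_has_eq0; apply/hasP; exists i; first by rewrite mem_index_enum.
  by rewrite /wcoef; move: f0; rewrite -eqn0Ngt => ->.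
rewrite big_mkcond; apply: eq_bigr => f _.
under eq_bigr do rewrite -mul_polyC.
rewrite prodr_monomial coefMXn coefC.
case: ltngtP => [lt_n|lt_n|<-]; rewrite ?subnn //.
by rewrite (_ : (n - _ == 0)%N = false) //; apply/negbTE; rewrite subn_eq0 -ltnNge.
Qed.

Lemma coef_exprN (p : {poly M}) m k :
  ((- p) ^+ m)`_k = (-1 : R[i]) ^+ m *: (p ^+ m)`_k.
Proof.
rewrite exprNn -[(-1 : {poly M}) ^+ m]signr_odd -[(-1 : R[i]) ^+ m]signr_odd.
by case: odd; rewrite ?expr0 ?expr1 ?mul1r ?scale1r ?mulN1r ?coefN ?scaleN1r.
Qed.

Lemma inv_oneW_coef (Wc : nat -> M) (V : mseries R) n : (0 < n)%N ->
  smul (oneW Wc) V = sone R ->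
  V n = \sum_(1 <= j < n.+1) (-1) ^+ j *: compsum Wc n j.
Proof.
move=> n_gt0 inv_V.
set w := wtrunc Wc n; set s := \sum_(j < n.+1) (- w) ^+ j.
have geom_s : (1 + w) * s = 1 - (- w) ^+ n.+1.
  by apply: oppr_inj; rewrite opprB subrX1 -opprD mulNr addrC.
have s_inv k : (k <= n)%N -> \sum_(i < k.+1) oneW Wc i * s`_(k - i) = sone R k.
  move=> lekn; have : ((1 + w) * s)`_k = sone R k.
    rewrite geom_s coefB coef_exprN /w wtrunc_mulX coef_exprMX_small ?ltnS //.
    by rewrite scaler0 subr0 coef1 /sone; case: (k == 0%N).
  rewrite coefM => <-; apply: eq_bigr => i _.
  rewrite coefD coef1 /w /wtrunc coef_poly /oneW /wcoef.
  rewrite (leq_trans (ltn_ord i)) //.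
  by case: (i == 0 :> nat); rewrite ?add0r ?addr0.
have V_s : forall k, (k <= n)%N -> V k = s`_k.
  apply: (@convl_unit_inj _ (oneW Wc) V (fun k => s`_k) n) => // k lekn.
  by rewrite s_inv // -inv_V.
rewrite V_s // /s coef_sum big_ord_recl coef_exprN expr0 coef1.
rewrite (_ : (n == 0%N) = false); last by rewrite eqn0Ngt n_gt0.
rewrite scaler0 add0r big_add1 /= big_mkord; apply: eq_bigr => j _.
by rewrite coef_exprN compsum_coef.
Qed.

Definition sigma3_ser : mseries R := fun m => if m == 0%N then sigma3 R else 0.

(* (1 + W) sigma3 = sigma3 (2 - (1 + W)) by anticommutation, and the second
   term is killed by V. *)
Lemma conj_sigma3_coef (Wc : nat -> M) (V : mseries R) n : (0 < n)%N ->
  (forall n, (0 < n)%N -> offdiag (Wc n)) ->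
  smul (oneW Wc) V = sone R ->
  smul (smul (oneW Wc) sigma3_ser) V n = 2%:R *: (sigma3 R * V n).
Proof.
move=> n_gt0 offW inv_V.
have mul_sigma3 k : smul (oneW Wc) sigma3_ser k = oneW Wc k * sigma3 R.
  rewrite /smul /sigma3_ser big_ord_recr /= subnn eqxx big1 ?add0r // => i _.
  by rewrite subn_eq0 leqNgt ltn_ord /= mulr0.
rewrite {1}/smul; under eq_bigr do rewrite mul_sigma3.
transitivity (\sum_(k < n.+1)
    ((if k == 0 :> nat then 2%:R *: (sigma3 R * V n) else 0)
     - sigma3 R * (oneW Wc k * V (n - k)%N))).
  apply: eq_bigr => k _; rewrite /oneW.
  case: eqP => [->|k_neq0]; first by rewrite subn0 !mul1r scaler_nat mulr2n addrK.
  by rewrite add0r offdiag_mul_sigma3 ?mulNr ?mulrA //; apply: offW; rewrite lt0n; apply/eqP.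
have inv_V_n : \sum_(i < n.+1) oneW Wc i * V (n - i)%N = 0.
  by have := congr1 (fun f => f n) inv_V; rewrite /smul /sone /= (negbTE (lt0n_neq0 n_gt0)).
by rewrite sumrB -mulr_sumr inv_V_n mulr0 subr0 big_ord_recl /= big1 ?addr0.
Qed.

(* Multiplying by 1 / (lambda - mu): the geometric coefficients satisfy
   g_{k+1} = lambda g_k for k >= 1 and g_1 = -1. *)
Lemma geom_conv_rec (lam : R[i]) (A : nat -> M) n :
  \sum_(k < n.+3) geom lam k *: A (n.+2 - k)%N =
  lam *: \sum_(k < n.+2) geom lam k *: A (n.+1 - k)%N - A n.+1.
Proof.
rewrite big_ord_recl [in RHS]big_ord_recl /geom /= !scale0r !add0r.
rewrite big_ord_recl /= expr0 scaleN1r subn1 /= addrC; congr (_ + _).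
rewrite scaler_sumr; apply: eq_bigr => k _.
by rewrite /bump /= !add1n !subSS scalerA exprS mulrN.
Qed.

Lemma invCi : ('i : R[i])^-1 = - 'i.
Proof.
apply: (@mulfI _ 'i); first by rewrite neq0Ci.
by rewrite mulfV ?neq0Ci // mulrN mulCii opprK.
Qed.

Section Y.
Variables (gam kap : R) (lam : R[i]) (Wc : nat -> M) (V : mseries R).
Hypothesis kap_neq0 : kap != 0.
Hypothesis inv_V : smul (oneW Wc) V = sone R.

Let kapC_neq0 : kap%:C != 0.
Proof. by rewrite fmorph_eq0. Qed.

Lemma Yn0 : Yn gam kap lam Wc V 0 = ('i * gam%:C / 2) *: sigma3 R.
Proof.
have V0 : V 0%N = 1.
  by move: (congr1 (fun f => f 0%N) inv_V); rewrite /smul /= big_ord1 /oneW /= mul1r.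
rewrite /Yn /Ycoef /= !big_ord_recl big_ord0 /geom /= scale0r add0r addr0.
rewrite /smul /= !big_ord1 /oneW /= V0 !mul1r mulr1 expr0 scaleN1r.
rewrite scalerN -scaleNr scalerA; congr (_ *: _).
by rewrite -mulrN1 invfM invCi; field.
Qed.

Hypothesis offW : forall n, (0 < n)%N -> offdiag (Wc n).

Lemma YnS n :
  Yn gam kap lam Wc V n.+1 =
  lam *: Yn gam kap lam Wc V n + ('i * gam%:C) *: (sigma3 R *m V n.+1).
Proof.
rewrite /Yn /Ycoef /= geom_conv_rec -/sigma3_ser conj_sigma3_coef // mulmxE.
rewrite scalerBr scalerDr !scalerA -scaleNr scalerA.
congr (_ *: _ + _ *: _); first by field; rewrite neq0Ci kapC_neq0.
transitivity (- gam%:C / 'i); first by field; rewrite neq0Ci kapC_neq0.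
by rewrite invCi mulrN mulNr opprK mulrC.
Qed.

End Y.
End Series.

Theorem mainTheorem2 (R : rcfType) (kap gam : R)
    (W : nat -> R -> R -> 'M[R[i]]_2) (xi eta : R) (lam : R[i])
    (V : mseries R) :
  kap != 0 ->
  (gam = 1 \/ gam = -1) ->
  (forall n, (0 < n)%N -> offdiag (W n xi eta)) ->
  (* V is the formal inverse of 1 + W(xi, eta, mu) in the ring of series in mu^{-1} *)
  smul (oneW (fun n => W n xi eta)) V = sone R ->
  smul V (oneW (fun n => W n xi eta)) = sone R ->
  Yn gam kap lam (fun n => W n xi eta) V 0 = ('i * gam%:C / 2) *: sigma3 R /\
  (forall n, (0 < n)%N ->
     Yn gam kap lam (fun n => W n xi eta) V n =
       lam *: Yn gam kap lam (fun n => W n xi eta) V n.-1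
       + ('i * gam%:C) *: (sigma3 R *m
           \sum_(1 <= j < n.+1) (-1) ^+ j *: compsum (fun n => W n xi eta) n j)).
Proof.
move=> kap_neq0 _ offW inv_V _; split; first exact: Yn0.
case=> [//|n] _.
by rewrite (YnS _ _ kap_neq0 inv_V offW) (inv_oneW_coef _ inv_V).
Qed.
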